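(* Let $q\ge2$, let $n_i\to\infty$, let $(R_i)$ be reals with $R_i\to\infty$, and let $(l_i)$ be positive integers such that $l_i\le\beta n_i$ for all $i$, for some constant $\beta>0$. For each $i$ let $\mathcal C_i$ be an $l_i$-shot ID code for $\Pi^q_{n_i}$ with $M_i\ge 2^{R_i n_i^{l_i(q-1)}}$ messages and type-I and type-II error probabilities $\lambda_{1,i},\lambda_{2,i}$. Then $\liminf_{i\to\infty}(\lambda_{1,i}+\lambda_{2,i})\ge1$.
   Context: Fix an integer $q\ge 2$ and let $\mathcal A_q=\{1,\dots,q\}$. For $n\ge1$ and $\sigma\in S_n$ (the symmetric group on $\{1,\dots,n\}$), $\sigma\mathbf x=(x_{\sigma^{-1}(1)},\dots,x_{\sigma^{-1}(n)})$ for $\mathbf x\in\mathcal A_q^n$. The $n$-block $q$-ary uniform permutation channel $\Pi^q_n$ has input/output alphabet $\mathcal A_q^n$ and $\Pi^q_n(\mathbf y\mid\mathbf x)=\frac1{n!}\sum_{\sigma\in S_n}\mathbf 1\{\mathbf y=\sigma\mathbf x\}$. Using it $l$ times (independently on each block) gives the channel $W^{(l)}$ on $(\mathcal A_q^n)^l$ with $W^{(l)}(\mathbf y^{(1)},\dots,\mathbf y^{(l)}\mid \mathbf x^{(1)},\dots,\mathbf x^{(l)})=\prod_{s=1}^l\Pi^q_n(\mathbf y^{(s)}\mid\mathbf x^{(s)})$. An $l$-shot ID code with $M$ messages for $\Pi^q_n$ (an ''$(n,l,M,\lambda_1,\lambda_2)$ ID code'') is a family $\{(Q_i,\mathcal D_i)\}_{i=1}^M$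 with $Q_i$ a probability distribution on $(\mathcal A_q^n)^l$ and $\mathcal D_i\subseteq(\mathcal A_q^n)^l$; its error probabilities are $\lambda_{i\to j}=\sum_{\underline{\mathbf x}}Q_i(\underline{\mathbf x})\sum_{\underline{\mathbf y}\in\mathcal D_j}W^{(l)}(\underline{\mathbf y}\mid\underline{\mathbf x})$ ($i\neq j$), $\lambda_{i\not\to i}=\sum_{\underline{\mathbf x}}Q_i(\underline{\mathbf x})\sum_{\underline{\mathbf y}\notin\mathcal D_i}W^{(l)}(\underline{\mathbf y}\mid\underline{\mathbf x})$, type-I error probability $\lambda_1=\max_i\lambda_{i\not\to i}$, type-II error probability $\lambda_2=\max_{i\ne j}\lambda_{i\to j}$. *)

From HB Require Import structures.
From mathcomp Require Import all_boot all_order all_algebra all_fingroup.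
From mathcomp Require Import all_classical all_reals all_analysis.
Set Implicit Arguments. Unset Strict Implicit. Unset Printing Implicit Defensive.
Import Order.TTheory GRing.Theory Num.Theory.
Local Open Scope ring_scope.

(* Alphabet A_q = {1,...,q} is modelled by 'I_q = {0,...,q-1} (relabeling). *)
Definition block (q n : nat) := {ffun 'I_n -> 'I_q}.

Definition permblock (q n : nat) (s : 'S_n) (x : block q n) : block q n :=
  [ffun j => x ((s^-1)%g j)].

Definition Pi (R : realType) (q n : nat) (y x : block q n) : R :=
  (n`!%:R)^-1 * \sum_(s : 'S_n) (if y == permblock s x then 1 else 0).

Definition lblock (q n l : nat) := {ffun 'I_l -> block q n}.

Definition Wl (R : realType) (q n l : nat) (y x : lblock q n l) : R :=
  \prod_(s < l) Pi R (y s) (x s).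

Record IDcode (R : realType) (q n l M : nat) := {
  Qd : 'I_M -> {ffun lblock q n l -> R};
  Dset : 'I_M -> {set lblock q n l};
  Qd_ge0 : forall i x, 0 <= Qd i x;
  Qd_sum1 : forall i, \sum_x Qd i x = 1
}.

Definition lam_to (R : realType) q n l M (C : IDcode R q n l M) (i j : 'I_M) : R :=
  \sum_x Qd C i x * \sum_(y in Dset C j) Wl R y x.

Definition lam_not (R : realType) q n l M (C : IDcode R q n l M) (i : 'I_M) : R :=
  \sum_x Qd C i x * \sum_(y in ~: Dset C i) Wl R y x.

Definition lambda1 (R : realType) q n l M (C : IDcode R q n l M) : R :=
  \big[Num.max/0]_(i < M) lam_not C i.

(* type-II error probability: max_{i <> j} lambda_{i -> j} (0 if M <= 1) *)
Definition lambda2 (R : realType) q n l M (C : IDcode R q n l M) : R :=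
  \big[Num.max/0]_(p : 'I_M * 'I_M | p.1 != p.2) lam_to C p.1 p.2.

From HB Require Import structures.
From mathcomp Require Import all_boot all_order all_algebra all_fingroup.
From mathcomp Require Import all_classical all_reals all_analysis.
From mathcomp Require Import lra.
Import Order.TTheory GRing.Theory Num.Theory.
Set Implicit Arguments. Unset Strict Implicit.
Local Open Scope ring_scope.

(* The uniform permutation channel only reveals the type (the symbol counts) of
   each input block, so for each message the output distribution depends only
   on the distribution that its input distribution induces on the at most
   (n + 1) ^ (l (q - 1)) type keys.  If lambda1 + lambda2 < 1 - eps, the decoding
   set of i tells message i from message j, so these key distributions are
   pairwise eps-separated in l1.  Quantizing them to multiples of 1 / (K m),
   with K keys and 1/m < eps, and counting the quantized vectors by stars and
   bars gives M <= 2 ^ (K (m + 1)).  Against M >= 2 ^ (R n ^ (l (q - 1))) this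
   forces R <= (m + 1) (1 + 1/n) ^ (l (q - 1)) <= (m + 1) e ^ (beta (q - 1)),
   contradicting R -> oo. *)

(* Recursion on N + K: a vector with head 0 loses its head (N decreases), one
   with a positive head has it decremented (K decreases). *)
Lemma size_uniq_bounded_sumn_vectors N K (s : seq (seq nat)) : uniq s ->
  all (fun v => (size v == N) && (sumn v <= K)%N) s -> (size s <= 2 ^ (N + K))%N.
Proof.
have [k] := ubnP (N + K); elim: k N K s => // k IH N K s NKk us /allP s_vK.
case: N NKk s_vK => [|N] NKk s_vK.
  have: (size s <= size [:: [::] : seq nat])%N.
    apply: uniq_leq_size => // v /s_vK /andP[/eqP/size0nil -> _].
    by rewrite inE.
  by move/leq_trans; apply; rewrite expn_gt0.
pose head0 v := head 0%N v == 0%N.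
rewrite -(count_predC head0 s) -!size_filter.
have head0_le : (size [seq v <- s | head0 v] <= 2 ^ (N + K))%N.
  rewrite -(size_map behead); apply: IH; first by rewrite -ltnS -addSn.
    rewrite map_inj_in_uniq ?filter_uniq // => v w.
    rewrite !mem_filter => /andP[/eqP v0 /s_vK vs] /andP[/eqP w0 /s_vK ws].
    by case: v w vs ws v0 w0 => [|a v] [|b w] //= _ _ -> -> ->.
  apply/allP => u /mapP[v]; rewrite mem_filter => /andP[/eqP v0 /s_vK vNK] ->.
  by case: v v0 vNK => [|a v] //= ->; rewrite add0n eqSS.
have head_pos_le :
    (size [seq v <- s | ~~ head0 v] <= if K is K'.+1 then 2 ^ (N.+1 + K') else 0)%N.
  case: K NKk s_vK {head0_le} => [|K] NKk s_vK.
    rewrite leqn0 size_filter -(count_pred0 s); apply/eqP/eq_in_count.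
    move=> v /s_vK; rewrite /head0.
    by case: v => [|a v] //=; rewrite leqn0 addn_eq0 => /andP[_ /andP[->]].
  pose dec v := (head 0%N v).-1 :: behead v.
  rewrite -(size_map dec); apply: IH; first by rewrite -ltnS -addnS.
    rewrite map_inj_in_uniq ?filter_uniq // => v w.
    rewrite !mem_filter /head0 => /andP[v0 _] /andP[w0 _].
    by case: v w v0 w0 => [|[|a] v] [|[|b] w] //= _ _ [-> ->].
  apply/allP => u /mapP[v]; rewrite mem_filter => /andP[v0 /s_vK vNK] ->.
  by case: v v0 vNK => [|[|a] v] //= _; rewrite addSn ltnS.
case: K {NKk s_vK} head0_le head_pos_le => [|K] head0_le head_pos_le.
  rewrite leqn0 in head_pos_le; rewrite (eqP head_pos_le) addn0.
  by apply: leq_trans head0_le _; rewrite leq_exp2l // addn0.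
apply: leq_trans (leq_add head0_le head_pos_le) _.
by rewrite !addnS !addSn addnn -mul2n -expnS.
Qed.

Lemma truncn_eq_dist_lt1 (R : archiRealFieldType) (a b : R) : 0 <= a -> 0 <= b ->
  Num.truncn a = Num.truncn b -> `|a - b| < 1.
Proof.
move=> a0 b0 ab; have := truncnS_gt a; have := truncnS_gt b.
have := truncn_le a; have := truncn_le b; rewrite a0 b0 ab -natr1.
by rewrite ltr_norml => *; apply/andP; split; lra.
Qed.

Lemma card_l1_separated_distributions (R : realType) (Kt : finType) (M m : nat)
    (P : 'I_M -> Kt -> R) :
  (0 < m)%N -> (forall i k, 0 <= P i k) -> (forall i, \sum_k P i k = 1) ->
  (forall i j, i != j -> m%:R^-1 < \sum_k `|P i k - P j k|) ->
  (M <= 2 ^ (#|Kt| * m.+1))%N.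
Proof.
move=> m_gt0 P_ge0 P_sum1 P_sep; set K := (#|Kt| * m)%N.
pose v i := [seq Num.truncn (K%:R * P i k) | k <- enum Kt].
have v_close i j : v i = v j -> \sum_k `|P i k - P j k| <= m%:R^-1.
  case: (posnP #|Kt|) => [/card0_eq Kt0 _ | Kt_gt0 /eq_in_map vij].
    by rewrite big_pred0 ?invr_ge0 // => k; rewrite Kt0.
  have K_gt0 : 0 < K%:R :> R by rewrite ltr0n muln_gt0 Kt_gt0.
  apply: le_trans (_ : \sum_(k : Kt) K%:R^-1 <= _).
    apply: ler_sum => k _; rewrite -[_^-1]mulr1 ler_pdivlMl // ltW //.
    rewrite -(gtr0_norm K_gt0) -normrM mulrBr truncn_eq_dist_lt1 ?mulr_ge0 //.
    by apply: vij; rewrite mem_enum.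
  rewrite sumr_const -[#|_|]/#|Kt| -[_ *+ _]mulr_natl /K natrM invfM.
  by rewrite mulrA mulfV ?mul1r // pnatr_eq0 -lt0n.
have v_inj : injective v.
  move=> i j /v_close ij_close; apply/eqP; apply: contraLR ij_close => /P_sep.
  by rewrite -ltNge.
rewrite -[M]card_ord cardE -(size_map v) mulnS.
apply: size_uniq_bounded_sumn_vectors; first by rewrite map_inj_uniq ?enum_uniq.
apply/allP => _ /mapP[i _ ->]; rewrite size_map -cardE eqxx /=.
rewrite sumnE big_map big_enum -(ler_nat R) natr_sum /=.
apply: le_trans (_ : \sum_k K%:R * P i k <= _).
  by apply: ler_sum => k _; rewrite truncn_le mulr_ge0.
by rewrite -mulr_sumr P_sum1 mulr1.
Qed.

Section Channel.
Variables (R : realType) (q n : nat).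

Lemma permblockM (s p : 'S_n) (x : block q n) :
  permblock s (permblock p x) = permblock (p * s)%g x.
Proof. by apply/ffunP => j; rewrite !ffunE invMg permM. Qed.

Lemma Pi_permblock (p : 'S_n) (y x : block q n) : Pi R y (permblock p x) = Pi R y x.
Proof.
rewrite /Pi [in RHS](reindex_inj (mulgI p)); congr (_ * _).
by apply: eq_bigr => s _; rewrite permblockM.
Qed.

Lemma Pi_ge0 (y x : block q n) : 0 <= Pi R y x.
Proof. by rewrite mulr_ge0 ?invr_ge0 // sumr_ge0 // => s _; case: ifP. Qed.

Lemma sum_Pi (x : block q n) : \sum_y Pi R y x = 1.
Proof.
rewrite /Pi -mulr_sumr exchange_big /=.
under eq_bigr do rewrite -big_mkcond big_pred1_eq.
by rewrite sumr_const card_Sn mulVf // pnatr_eq0 -lt0n fact_gt0.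
Qed.

Lemma Wl_ge0 l (y x : lblock q n l) : 0 <= Wl R y x.
Proof. by rewrite prodr_ge0 // => s _; apply: Pi_ge0. Qed.

Lemma sum_Wl l (x : lblock q n l) : \sum_y Wl R y x = 1.
Proof.
rewrite /Wl -(bigA_distr_bigA (fun s y => Pi R y (x s))) /=.
by rewrite big1 // => s _; apply: sum_Pi.
Qed.

Lemma sum_Wl_setC l (D : {set lblock q n l}) (x : lblock q n l) :
  \sum_(y in D) Wl R y x + \sum_(y in ~: D) Wl R y x = 1.
Proof.
rewrite -(sum_Wl x) [in RHS](bigID (mem D)) /=.
by congr (_ + _); apply: eq_bigl => y; rewrite !inE.
Qed.

End Channel.

Lemma sum_count_mem (T : finType) (s : seq T) : (\sum_(a : T) count_mem a s)%N = size s.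
Proof.
elim: s => [|x s IH] /=; first by rewrite big1.
rewrite big_split /= IH (bigD1 x) //= eqxx big1 // => a /negbTE.
by rewrite eq_sym => ->.
Qed.

Definition symcount q n (b : block q n) (a : 'I_q) : nat := count_mem a (codom b).

Lemma sum_symcount q n (b : block q n) : (\sum_a symcount b a)%N = n.
Proof. by rewrite sum_count_mem size_codom card_ord. Qed.

Lemma symcount_le q n (b : block q n) a : (symcount b a <= n)%N.
Proof. by rewrite -[n in (_ <= n)%N]card_ord -(size_codom b) count_size. Qed.

Lemma symcount_eq_permblock q n (b b' : block q n) :
  (forall a, symcount b a = symcount b' a) -> exists p : 'S_n, b' = permblock p b.
Proof.
move=> bb'; have /tuple_permP[p b'p] : perm_eq [tuple b' j | j < n] [tuple b j | j < n].
  by apply/allP => a _; have := bb' a; rewrite /symcount /= !codomE => ->.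
exists p^-1%g; apply/ffunP => j; rewrite ffunE invgK.
by have := congr1 (fun t => tnth t j) (val_inj b'p); rewrite !tnth_mktuple.
Qed.

Lemma Pi_symcount (R : realType) q n (y x x' : block q n) :
  (forall a, symcount x a = symcount x' a) -> Pi R y x = Pi R y x'.
Proof. by move=> /symcount_eq_permblock[p ->]; rewrite Pi_permblock. Qed.

(* The count of the last symbol is determined by the others, so only q - 1
   counts are recorded: there are (n + 1) ^ (l (q - 1)) keys, not
   (n + 1) ^ (l q). *)
Definition type_key q' n l (x : lblock q'.+1 n l) :
    {ffun 'I_l -> {ffun 'I_q' -> 'I_n.+1}} :=
  [ffun s => [ffun a => inord (symcount (x s) (widen_ord (leqnSn q') a))]].
Arguments type_key {q' n l}.

Lemma type_key_symcount q' n l (x x' : lblock q'.+1 n l) :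
  type_key x = type_key x' -> forall s a, symcount (x s) a = symcount (x' s) a.
Proof.
move=> xx' s.
have init (a : 'I_q') : symcount (x s) (widen_ord (leqnSn q') a) =
                          symcount (x' s) (widen_ord (leqnSn q') a).
  have := congr1 (fun k : {ffun 'I_l -> {ffun 'I_q' -> 'I_n.+1}} => val (k s a)) xx'.
  by rewrite !ffunE /= !inordK // ltnS symcount_le.
move=> a; have [a_lt|a_ge] := ltnP a q'.
  by have -> : a = widen_ord (leqnSn q') (Ordinal a_lt) by apply: val_inj.
have -> : a = ord_max by apply/val_inj/eqP; rewrite eqn_leq a_ge -ltnS ltn_ord.
have := sum_symcount (x' s); rewrite -[RHS](sum_symcount (x s)) !big_ord_recr /=.
by rewrite (eq_bigr _ (fun a _ => init a)) => /addnI.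
Qed.

Lemma Wl_type_key (R : realType) q' n l (y x x' : lblock q'.+1 n l) :
  type_key x = type_key x' -> Wl R y x = Wl R y x'.
Proof.
by move=> /type_key_symcount xx'; apply: eq_bigr => s _; apply: Pi_symcount.
Qed.

Lemma sum_mulB_le_pushforward_l1 (R : realDomainType) (X Kt : finType) (key : X -> Kt)
    (G P1 P2 : X -> R) :
  (forall x, 0 <= G x <= 1) -> (forall x x', key x = key x' -> G x = G x') ->
  \sum_x P1 x * G x - \sum_x P2 x * G x <=
  \sum_k `|\sum_(x | key x == k) P1 x - \sum_(x | key x == k) P2 x|.
Proof.
move=> G01 G_key; rewrite -sumrB (partition_big key predT) //=.
apply: le_trans (ler_norm _) _; apply: le_trans (ler_norm_sum _ _ _) _.
apply: ler_sum => k _; case: (pickP (fun x => key x == k)) => [x0 /eqP x0k|]; last first.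
  by move=> no_k; rewrite !big_pred0 ?subrr ?normr0.
rewrite (eq_bigr (fun x => (P1 x - P2 x) * G x0)); last first.
  by move=> x /eqP xk; rewrite -mulrBl (G_key x x0) // xk x0k.
have /andP[G0 G1] := G01 x0.
by rewrite -mulr_suml sumrB normrM (ger0_norm G0) ler_piMr.
Qed.

Section Errors.
Variables (R : realType) (q n l M : nat) (C : IDcode R q n l M).

Lemma lam_not_le_lambda1 i : lam_not C i <= lambda1 C.
Proof. by rewrite /lambda1 (bigD1 i) //= le_max lexx. Qed.

Lemma lam_to_le_lambda2 i j : i != j -> lam_to C i j <= lambda2 C.
Proof. by move=> ij; rewrite /lambda2 (bigD1 (i, j)) //= le_max lexx. Qed.

End Errors.

Section TypeKeyDistribution.
Variables (R : realType) (q' n l M : nat) (C : IDcode R q'.+1 n l M).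

Definition key_dist i (k : {ffun 'I_l -> {ffun 'I_q' -> 'I_n.+1}}) : R :=
  \sum_(x | type_key x == k) Qd C i x.

Lemma key_dist_ge0 i k : 0 <= key_dist i k.
Proof. by apply: sumr_ge0 => x _; apply: Qd_ge0. Qed.

Lemma sum_key_dist i : \sum_k key_dist i k = 1.
Proof. by rewrite -(Qd_sum1 C i) [RHS](partition_big type_key predT). Qed.

Lemma key_dist_separated eps i j : lambda1 C + lambda2 C < 1 - eps -> i != j ->
  eps < \sum_k `|key_dist i k - key_dist j k|.
Proof.
move=> small_err ij.
pose G x := \sum_(y in Dset C i) Wl R y x.
have G_cover x : G x + \sum_(y in ~: Dset C i) Wl R y x = 1 by apply: sum_Wl_setC.
have G01 x : 0 <= G x <= 1.
  have := G_cover x; have : 0 <= \sum_(y in ~: Dset C i) Wl R y x.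
    by apply: sumr_ge0 => y _; apply: Wl_ge0.
  have : 0 <= G x by apply: sumr_ge0 => y _; apply: Wl_ge0.
  by move=> *; apply/andP; split; lra.
have G_key x x' : type_key x = type_key x' -> G x = G x'.
  by move=> xx'; apply: eq_bigr => y _; apply: Wl_type_key.
have typeI : lam_not C i = 1 - \sum_x Qd C i x * G x.
  rewrite /lam_not -(Qd_sum1 C i) -sumrB; apply: eq_bigr => x _.
  by apply/eqP; rewrite eq_sym subr_eq -mulrDr addrC G_cover mulr1.
have ji : j != i by rewrite eq_sym.
have := lam_not_le_lambda1 C i; have := lam_to_le_lambda2 C ji.
have := sum_mulB_le_pushforward_l1 (Qd C i) (Qd C j) G01 G_key.
by rewrite typeI /lam_to -/G; lra.
Qed.

Lemma card_messages_le m : (0 < m)%N -> lambda1 C + lambda2 C < 1 - m%:R^-1 ->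
  (M <= 2 ^ ((n.+1 ^ q') ^ l * m.+1))%N.
Proof.
move=> m_gt0 small_err.
have -> : ((n.+1 ^ q') ^ l)%N = #|{ffun 'I_l -> {ffun 'I_q' -> 'I_n.+1}}|.
  by rewrite !card_ffun !card_ord.
apply: (@card_l1_separated_distributions R _ M m key_dist) => //.
- exact: key_dist_ge0.
- exact: sum_key_dist.
- by move=> i j; apply: key_dist_separated.
Qed.

End TypeKeyDistribution.

Lemma powR2_le_expn2 (R : realType) (x : R) (k : nat) :
  2 `^ x <= (2 ^ k)%:R -> x <= k%:R.
Proof.
rewrite natrX -powR_mulrn // => le_pow.
have : ln (2 `^ x) <= ln (2 `^ k%:R) :> R by rewrite ler_ln ?posrE ?powR_gt0.
by rewrite !ln_powR ler_pM2r // ln_gt0 // ltr1n.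
Qed.

Lemma expr_succ_div_le_expR (R : realType) (n k : nat) : (0 < n)%N ->
  (n.+1%:R / n%:R) ^+ k <= expR (k%:R / n%:R) :> R.
Proof.
move=> n_gt0; have n_neq0 : n%:R != 0 :> R by rewrite pnatr_eq0 -lt0n.
rewrite -natr1 mulrDl mulfV // mul1r expRM_natl.
by rewrite lerXn2r ?nnegrE ?addr_ge0 ?expR_ge0 // expR_ge1Dx.
Qed.

Lemma rate_le_of_card_le (R : realType) (Q n l M m : nat) (Rs beta : R) :
  (0 < n)%N -> l%:R <= beta * n%:R ->
  2 `^ (Rs * n%:R ^+ (l * Q)) <= M%:R ->
  (M <= 2 ^ ((n.+1 ^ Q) ^ l * m.+1))%N ->
  Rs <= m.+1%:R * expR (beta * Q%:R).
Proof.
move=> n_gt0 l_le lower upper; set k := (l * Q)%N.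
have n_gt0R : 0 < n%:R :> R by rewrite ltr0n.
have le_pow : 2 `^ (Rs * n%:R ^+ k) <= (2 ^ ((n.+1 ^ Q) ^ l * m.+1))%:R.
  by apply: le_trans lower _; rewrite ler_nat.
move/powR2_le_expn2: le_pow; rewrite -expnM [(Q * l)%N]mulnC -/k natrM natrX.
rewrite -ler_pdivlMr ?exprn_gt0 // mulrAC -expr_div_n mulrC => Rs_le.
apply: le_trans Rs_le _; rewrite ler_pM2l ?ltr0n //.
apply: le_trans (expr_succ_div_le_expR _ _ n_gt0) _; rewrite ler_expR /k natrM.
by rewrite ler_pdivrMr // mulrAC ler_wpM2r ?ler0n.
Qed.

Lemma limn_einf_ge (R : realType) (u : R^nat) (a : R) :
  (forall e, 0 < e -> exists N, forall i, (N <= i)%N -> a - e <= u i) ->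
  (a%:E <= limn_einf (fun i => (u i)%:E))%E.
Proof.
move=> u_ge; rewrite limn_einf_lim; apply/lee_subgt0Pr => e e_gt0.
have [N uN] := u_ge e e_gt0.
apply: lime_ge; first exact: is_cvg_einfs.
exists N => // k /= Nk; apply: le_ereal_inf_tmp => _ [j /= kj <-].
by rewrite -EFinB lee_fin; apply/uN/(leq_trans Nk).
Qed.

Unset Implicit Arguments.
Set Strict Implicit.

Theorem theorem2 (R : realType) (q : nat) (n l M : nat -> nat) (Rs : nat -> R)
  (beta : R) (C : forall i, IDcode R q (n i) (l i) (M i)) :
  (2 <= q)%N ->
  (forall K : nat, exists N : nat, forall i, (N <= i)%N -> (K <= n i)%N) ->
  (forall K : R, exists N : nat, forall i, (N <= i)%N -> K <= Rs i) ->
  0 < beta ->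
  (forall i, (0 < l i)%N) ->
  (forall i, (l i)%:R <= beta * (n i)%:R) ->
  (forall i, (2 `^ (Rs i * (n i)%:R ^+ (l i * (q - 1)))) <= (M i)%:R) ->
  (1%:E <= limn_einf (fun i => (lambda1 (C i) + lambda2 (C i))%:E))%E.
Proof.
move=> q_ge2 n_oo Rs_oo _ _ l_le M_ge.
case: q C M_ge q_ge2 => [|[|q']] // C M_ge _.
apply: limn_einf_ge => e e_gt0.
pose m := (Num.truncn e^-1).+1.
have m_inv_lt : m%:R^-1 < e.
  by rewrite -[e]invrK ltf_pV2 ?posrE ?invr_gt0 ?ltr0n // truncnS_gt.
have [N1 n_gt0] := n_oo 1%N.
have [N2 Rs_large] := Rs_oo (m.+1%:R * expR (beta * q'.+1%:R) + 1).
exists (maxn N1 N2) => i; rewrite geq_max => /andP[/n_gt0 ni /Rs_large Rsi].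
rewrite leNgt; apply/negP => small_err.
have := M_ge i; rewrite subSS subn0 => M_ge_i.
have small_err' : lambda1 (C i) + lambda2 (C i) < 1 - m%:R^-1 by lra.
have := rate_le_of_card_le ni (l_le i) M_ge_i (card_messages_le (ltn0Sn _) small_err').
by rewrite -/m; lra.
Qed.
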